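(* A nonnegative matrix $M\in\mathbb{R}_+^{p\times q}$ is a slack matrix of a polyhedral cone if and only if $$\{Mz : z\in\mathbb{R}_+^q\}=\{Mz: z\in\mathbb{R}^q\}\cap\mathbb{R}_+^p,$$ i.e., the cone spanned by the columns of $M$ coincides with the set of nonnegative vectors in the column span of $M$.
   Context: A matrix $S\in\mathbb{R}^{p\times q}$ is a slack matrix of a polyhedral cone $K\subseteq\mathbb{R}^n$ if there are matrices $A\in\mathbb{R}^{p\times n}$ and $B\in\mathbb{R}^{n\times q}$ with $K=\{x\in\mathbb{R}^n: x^TB\ge 0\}=\{y^TA: y\in\mathbb{R}_+^p\}$ and $S=AB$. A matrix is a slack matrix of a polyhedral cone if it is a slack matrix of some polyhedral cone. *)

From mathcomp Require Import all_boot all_order all_algebra.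
Set Implicit Arguments. Unset Strict Implicit. Unset Printing Implicit Defensive.
Import Order.TTheory GRing.Theory Num.Theory.
Local Open Scope ring_scope.

Definition nonneg_mx (R : realFieldType) m n (A : 'M[R]_(m, n)) : Prop :=
  forall i j, 0 <= A i j.

(* S is a slack matrix of a polyhedral cone K in R^n (elements of R^n are
   represented as row vectors 'rV_n, so x^T B is x *m B):
   K = {x | x^T B >= 0} = {y^T A | y >= 0} and S = A B. *)
Definition is_slack_matrix_of_cone (R : realFieldType) (p q n : nat)
    (S : 'M[R]_(p, q)) (K : 'rV[R]_n -> Prop) : Prop :=
  exists (A : 'M[R]_(p, n)) (B : 'M[R]_(n, q)),
    (forall x : 'rV[R]_n, K x <-> nonneg_mx (x *m B)) /\
    (forall x : 'rV[R]_n, K x <-> exists y : 'rV[R]_p, nonneg_mx y /\ x = y *m A) /\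
    S = A *m B.

Definition is_slack_matrix (R : realFieldType) (p q : nat) (S : 'M[R]_(p, q)) : Prop :=
  exists (n : nat) (K : 'rV[R]_n -> Prop), is_slack_matrix_of_cone S K.

From mathcomp Require Import all_boot all_order all_algebra.
From Stdlib Require Import Classical.
From mathcomp Require Import ring.
Set Implicit Arguments. Unset Strict Implicit. Unset Printing Implicit Defensive.
Import Order.TTheory GRing.Theory Num.Theory.
Local Open Scope ring_scope.

(* Both directions rest on Farkas' lemma, proved by induction on the number
   of generators, projecting them along one generator onto a separating
   hyperplane.  If M = A B is a slack matrix of K and M z >= 0, the form
   y |-> y B z is nonnegative on K = {y A | y >= 0}, so B z, and hence M z,
   is a nonnegative combination of columns.  Conversely, take a rank
   factorization M = A B and K = {x | x B >= 0}.  By the span condition the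
   cone {b | A b >= 0} dual to the rows of A is generated by the columns of
   B, i.e. it is the dual of K; by Farkas K is then generated by the rows
   of A. *)

Lemma nonneg_mulmx (R : realFieldType) m k l (A : 'M[R]_(m, k)) (B : 'M[R]_(k, l)) :
  nonneg_mx A -> nonneg_mx B -> nonneg_mx (A *m B).
Proof. by move=> A_ge0 B_ge0 i j; rewrite mxE sumr_ge0 // => t _; rewrite mulr_ge0. Qed.

Section Farkas.
Variables (R : realFieldType) (n : nat).
Implicit Types (x : 'rV[R]_n) (u v c : 'cV[R]_n) (s : seq 'cV[R]_n).

Definition dot x v : R := (x *m v) 0 0.

Lemma dotDr x u v : dot x (u + v) = dot x u + dot x v.
Proof. by rewrite /dot mulmxDr mxE. Qed.
Lemma dotZr x t v : dot x (t *: v) = t * dot x v.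
Proof. by rewrite /dot -scalemxAr mxE. Qed.
Lemma dotBr x u v : dot x (u - v) = dot x u - dot x v.
Proof. by rewrite /dot mulmxBr !mxE. Qed.
Lemma dotDl x y v : dot (x + y) v = dot x v + dot y v.
Proof. by rewrite /dot mulmxDl mxE. Qed.
Lemma dotZl x t v : dot (t *: x) v = t * dot x v.
Proof. by rewrite /dot -scalemxAl mxE. Qed.
Lemma dotNl x v : dot (- x) v = - dot x v.
Proof. by rewrite /dot mulNmx mxE. Qed.

Lemma dot_trmx_ge0 c : 0 <= dot c^T c.
Proof. by rewrite /dot mxE sumr_ge0 // => i _; rewrite mxE -expr2 sqr_ge0. Qed.

Lemma dot_trmx_eq0 c : dot c^T c = 0 -> c = 0.
Proof.
rewrite /dot mxE => sum_sq0; apply/matrixP => i j; rewrite (ord1 j) mxE.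
have sq_ge0 (k : 'I_n) : true -> 0 <= c^T 0 k * c k 0.
  by move=> _; rewrite mxE -expr2 sqr_ge0.
have := psumr_eq0P sq_ge0 sum_sq0 (i := i) isT.
by rewrite mxE -expr2 => /eqP; rewrite sqrf_eq0 => /eqP.
Qed.

Fixpoint conic_comb s c : Prop :=
  if s is a :: s' then exists2 t, 0 <= t & conic_comb s' (c - t *: a)
  else c = 0.

Lemma conic_comb_dot_ge0 x s c :
  conic_comb s c -> (forall a, a \in s -> 0 <= dot x a) -> 0 <= dot x c.
Proof.
elim: s c => [|a s IHs] c /=; first by move=> -> _; rewrite /dot mulmx0 mxE.
move=> [t t_ge0 cone_c] s_ge0; rewrite -[c](subrK (t *: a)) dotDr dotZr.
rewrite addr_ge0 //; last by rewrite mulr_ge0 ?s_ge0 ?mem_head.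
by apply: IHs => // b b_s; rewrite s_ge0 // inE b_s orbT.
Qed.

Lemma conic_comb_map (f : 'cV[R]_n -> 'cV[R]_n) s w :
  (forall u v, f (u + v) = f u + f v) -> (forall t u, f (t *: u) = t *: f u) ->
  conic_comb (map f s) w -> exists2 y, conic_comb s y & w = f y.
Proof.
move=> fD fZ; elim: s w => [|a s IHs] w /=.
  by move=> ->; exists 0 => //; have := fZ 0 0; rewrite !scale0r.
move=> [t t_ge0 /IHs [y cone_y fy]]; exists (y + t *: a).
  by exists t; rewrite ?addrK.
by rewrite fD fZ -fy subrK.
Qed.

Definition hproj x0 a v := v - (dot x0 v / dot x0 a) *: a.

Lemma hprojD x0 a u v : hproj x0 a (u + v) = hproj x0 a u + hproj x0 a v.
Proof. by rewrite /hproj dotDr mulrDl scalerDl opprD addrACA. Qed.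

Lemma hprojZ x0 a t v : hproj x0 a (t *: v) = t *: hproj x0 a v.
Proof. by rewrite /hproj dotZr scalerBr scalerA mulrA. Qed.

Lemma dot_hproj x x0 a v :
  dot x (hproj x0 a v) = dot (x - (dot x a / dot x0 a) *: x0) v.
Proof. by rewrite /hproj dotBr dotZr dotDl dotNl dotZl; ring. Qed.

Lemma hproj_self x0 a : dot x0 a != 0 -> hproj x0 a a = 0.
Proof. by move=> x0a_neq0; rewrite /hproj divff // scale1r subrr. Qed.

Lemma farkas_seq s c :
  (forall x, (forall a, a \in s -> 0 <= dot x a) -> 0 <= dot x c) ->
  conic_comb s c.
Proof.
move: {2}(size s) (erefl (size s)) => k; elim: k s c => [|k IHk] [|a s] c //=.
  move=> _ /(_ (- c^T)); rewrite dotNl oppr_ge0 => /(_ (fun _ => ltac:(done))).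
  by move=> le0; apply: dot_trmx_eq0; apply/eqP; rewrite eq_le le0 dot_trmx_ge0.
move=> [size_s] c_dual.
have [[x0 [x0_s x0c_lt0]]|no_separator] := classic (exists x0,
  (forall b, b \in s -> 0 <= dot x0 b) /\ dot x0 c < 0); last first.
  exists 0; rewrite // scale0r subr0; apply: IHk => // x x_s.
  by rewrite leNgt; apply/negP => xc_lt0; apply: no_separator; exists x.
have x0a_lt0 : dot x0 a < 0.
  rewrite ltNge; apply/negP => x0a_ge0; move: x0c_lt0; rewrite ltNge c_dual //.
  by move=> b; rewrite inE => /predU1P [->|/x0_s].
have x0a_neq0 : dot x0 a != 0 by rewrite lt_eqF.
have cone_hproj_c : conic_comb (map (hproj x0 a) s) (hproj x0 a c).
  apply: IHk => [|x x_s]; first by rewrite size_map.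
  rewrite dot_hproj c_dual // => b /predU1P [->|b_s]; rewrite -dot_hproj.
    by rewrite hproj_self // /dot mulmx0 mxE.
  by rewrite x_s // map_f.
have [y cone_y hproj_c] := conic_comb_map (hprojD x0 a) (hprojZ x0 a) cone_hproj_c.
have x0y_ge0 : 0 <= dot x0 y by apply: conic_comb_dot_ge0 cone_y x0_s.
(* c - y is a multiple of a, with coefficient (x0.c - x0.y) / x0.a >= 0 *)
exists ((dot x0 c - dot x0 y) / dot x0 a).
  apply: mulr_le0; last by rewrite invr_le0 ltW.
  by rewrite subr_le0 (le_trans (ltW x0c_lt0)).
move: hproj_c; rewrite /hproj mulrBl scalerBl opprB addrCA => ->.
by rewrite addrC subrK.
Qed.

End Farkas.

Lemma farkas (R : realFieldType) n q (B : 'M[R]_(n, q)) (c : 'cV[R]_n) :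
  (forall x : 'rV[R]_n, nonneg_mx (x *m B) -> 0 <= (x *m c) 0 0) ->
  exists2 z : 'cV[R]_q, nonneg_mx z & c = B *m z.
Proof.
move=> c_dual.
have : conic_comb [seq col j B | j <- enum 'I_q] c.
  apply: farkas_seq => x cols_ge0; apply: c_dual => i j; rewrite (ord1 i).
  have -> : (x *m B) 0 j = dot x (col j B) by rewrite /dot colE mulmxA -colE !mxE.
  by apply: cols_ge0; apply: map_f; rewrite mem_enum.
elim: (enum 'I_q) c {c_dual} => [|j r IHr] c /=.
  by move=> ->; exists 0; [move=> i k; rewrite mxE | rewrite mulmx0].
move=> [t t_ge0 /IHr [z z_ge0 c_eq]]; exists (z + t *: delta_mx j 0).
  by move=> i k; rewrite !mxE addr_ge0 // mulr_ge0.
by rewrite mulmxDr -scalemxAr -colE -c_eq subrK.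
Qed.

Lemma mulmx11_tr (R : comPzSemiRingType) n (u : 'rV[R]_n) (v : 'cV[R]_n) :
  (u *m v) 0 0 = (v^T *m u^T) 0 0.
Proof. by rewrite -trmx_mul [RHS]mxE. Qed.

Section SlackMatrix.
Variables (R : realFieldType) (p q : nat).
Implicit Type M : 'M[R]_(p, q).

Definition nonneg_span_in_cone M := forall z : 'cV[R]_q,
  nonneg_mx (M *m z) -> exists2 z' : 'cV[R]_q, nonneg_mx z' & M *m z = M *m z'.

Lemma slack_matrix_nonneg_span_in_cone M : is_slack_matrix M -> nonneg_span_in_cone M.
Proof.
move=> [n [K [A [B [K_dual [K_gen ->]]]]]] z ABz_ge0.
have [z' z'_ge0 Bz_eq] : exists2 z', nonneg_mx z' & B *m z = B *m z'.
  apply: farkas => x /K_dual /K_gen [y [y_ge0 ->]].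
  by rewrite -mulmxA [A *m _]mulmxA; apply: nonneg_mulmx.
by exists z' => //; rewrite -!mulmxA Bz_eq.
Qed.

Lemma rank_factorization_dual_cone n (A : 'M[R]_(p, n)) (B : 'M[R]_(n, q)) :
  row_full A -> row_free B -> nonneg_span_in_cone (A *m B) ->
  forall b : 'cV[R]_n, nonneg_mx (A *m b) -> exists2 z, nonneg_mx z & b = B *m z.
Proof.
move=> A_full /row_freeP [B' BB'] AB_cone b Ab_ge0.
have Ab_eq : A *m b = A *m B *m (B' *m b) by rewrite -mulmxA [B *m _]mulmxA BB' mul1mx.
have [z z_ge0 ABz_eq] := AB_cone (B' *m b) (ltac:(by rewrite -Ab_eq)).
by exists z => //; apply: (row_full_inj A_full); rewrite Ab_eq ABz_eq mulmxA.
Qed.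

Lemma nonneg_span_in_cone_slack_matrix M :
  nonneg_mx M -> nonneg_span_in_cone M -> is_slack_matrix M.
Proof.
move=> M_ge0 M_cone; set A := col_base M; set B := row_base M.
have AB_eq : A *m B = M := mulmx_base M.
have AB_cone : nonneg_span_in_cone (A *m B) by rewrite AB_eq.
exists (\rank M), (fun x => nonneg_mx (x *m B)), A, B.
split=> [//|]; split=> [x|//]; split=> [xB_ge0|[y [y_ge0 ->]]]; last first.
  by rewrite -mulmxA AB_eq; apply: nonneg_mulmx.
have [z z_ge0 xT_eq] : exists2 z, nonneg_mx z & x^T = A^T *m z.
  apply: farkas => w wAT_ge0.
  have AwT_ge0 : nonneg_mx (A *m w^T) by move=> i j; rewrite -[A *m _]trmxK trmx_mul trmxK mxE.
  have [z z_ge0 wT_eq] :=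
    rank_factorization_dual_cone (col_base_full M) (row_base_free M) AB_cone AwT_ge0.
  by rewrite (mulmx11_tr w) trmxK wT_eq mulmxA; apply: nonneg_mulmx.
exists z^T; split; first by move=> i j; rewrite mxE.
by rewrite -[x]trmxK xT_eq trmx_mul trmxK.
Qed.

End SlackMatrix.

Theorem corollary2p3 (R : realFieldType) (p q : nat) (M : 'M[R]_(p, q)) :
  nonneg_mx M ->
  (is_slack_matrix M <->
   (forall v : 'cV[R]_p,
      (exists z : 'cV[R]_q, nonneg_mx z /\ v = M *m z) <->
      ((exists z : 'cV[R]_q, v = M *m z) /\ nonneg_mx v))).
Proof.
move=> M_ge0; split=> [/slack_matrix_nonneg_span_in_cone M_cone v|span_eq].
  split=> [[z [z_ge0 ->]]|[[z ->] Mz_ge0]]; first by split; [exists z | apply: nonneg_mulmx].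
  by have [z' z'_ge0 ->] := M_cone z Mz_ge0; exists z'.
apply: nonneg_span_in_cone_slack_matrix => // z Mz_ge0.
have [z' [z'_ge0 Mz_eq]] := proj2 (span_eq (M *m z)) (conj (ex_intro _ z erefl) Mz_ge0).
by exists z'.
Qed.
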